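(* Let $q$ be real with $0<q<1$ and consider the limit $q\to1-0$. (i) If $\mathbf{k}$ is an admissible index, then $\lim_{q \to 1-0}Z_{q}(g_{\mathbf{k}})=\zeta(\mathbf{k})$. (ii) For any $w \in \mathfrak{n}$, $\lim_{q \to 1-0}Z_{q}(w)=0$.
   Context: Indices: an index is a finite (possibly empty) tuple $\mathbf k=(k_1,\dots,k_r)$ of positive integers; admissible if empty or $k_r\ge2$. For admissible non-empty $\mathbf k$, $\zeta(\mathbf k)=\sum_{0<m_1<\cdots<m_r}m_1^{-k_1}\cdots m_r^{-k_r}$, and $\zeta(\varnothing)=1$. Let $\mathcal{C}=\mathbb{Q}[\hbar]$ ($\hbar$ formal), $\mathfrak{H}=\mathcal{C}\langle a,b\rangle$. For $k\ge1$, $g_k=ba^k$; $g_{\mathbf k}=g_{k_1}\cdots g_{k_r}$, $g_\varnothing=1$. $A=\{\hbar b\}\cup\{ba^k\mid k\ge1\}$, $\mathcal{C}\langle A\rangle$ the $\mathcal{C}$-subalgebra generated by $1$ and $A$, $\mathfrak z$ the $\mathcal C$-span of $A$, $\widehat{\mathfrak H^0}=\mathcal C+\sum_{k\ge1}\mathcal C\langle A\rangle g_k$. For $0<q<1$, $\mathbb{C}$ is a $\mathcal{C}$-module with $\hbar$ acting by $1-q$; $[m]=(1-q^m)/(1-q)$; $F_q(m;\cdot):\mathfrak{z}\to\mathbb{C}$ is $\mathcal{C}$-linear with $F_q(m;\hbar b)=1-q$, $F_q(m;g_k)=q^{km}/[m]^k$; $Z_{q,M}$ is $\mathcal{C}$-linear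 on $\mathcal C\langle A\rangle$ with $Z_{q,M}(1)=1$, $Z_{q,M}(u_1\cdots u_r)=\sum_{0<m_1<\cdots<m_r<M}\prod_i F_q(m_i;u_i)$ ($u_i\in A$); $Z_q(w)=\lim_{M\to\infty}Z_{q,M}(w)$ for $w\in\widehat{\mathfrak H^0}$. Let $\mathfrak n_0$ be the $\mathcal C$-span of the elements $(\hbar b)^{\alpha_1}g_{\beta_1+1}\cdots(\hbar b)^{\alpha_r}g_{\beta_r+1}$ with $r\ge1$, $\alpha_i,\beta_i\ge0$, such that $\alpha_s\ge1$ and $\beta_t\ge1$ for some $1\le s\le t\le r$; and $\mathfrak n=\mathfrak n_0+\hbar\widehat{\mathfrak H^0}$ (where $\hbar$ acts on values as $1-q$). *)

From Stdlib Require Import Reals QArith Qreals List Arith.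
From Coquelicot Require Import Coquelicot.
Import ListNotations.
Open Scope R_scope.

(** Letters of the alphabet A = {hbar b} U {g_k = b a^k | k >= 1}.
    [Hb] stands for hbar*b and [G k] for g_k; only [G k] with k >= 1 is a
    letter of A (see [valid_letter]). *)
Inductive letter : Type := Hb | G (k : nat).

Definition valid_letter (u : letter) : Prop :=
  match u with Hb => True | G k => (1 <= k)%nat end.

Definition word := list letter.

(** Elements of C = Q[hbar]: coefficient lists (lowest degree first). *)
Definition cpoly := list Q.

Fixpoint peval (c : cpoly) (x : R) : R :=
  match c with [] => 0 | a :: c' => Q2R a + x * peval c' x end.

Definition cone : cpoly := [1%Q].
Definition hbar_mul (c : cpoly) : cpoly := 0%Q :: c.

(** Elements of C<A> as formal C-linear combinations of A-words
    (the A-words form a C-basis of C<A>). *)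
Definition elt := list (cpoly * word).

Definition qnum (q : R) (m : nat) : R := (1 - q ^ m) / (1 - q).

Definition Fq (q : R) (m : nat) (u : letter) : R :=
  match u with
  | Hb => 1 - q
  | G k => q ^ (k * m) / (qnum q m) ^ k
  end.

Fixpoint rsum (f : nat -> R) (n : nat) : R :=
  match n with O => 0 | S n' => rsum f n' + f n' end.

(** nest f M [u_r; ...; u_1] = sum_{0<m_1<...<m_r<M} prod_i f m_i u_i
    (the list is given in reversed order). *)
Fixpoint nest {A : Type} (f : nat -> A -> R) (M : nat) (rl : list A) : R :=
  match rl with
  | [] => 1
  | u :: rl' => rsum (fun i => f (S i) u * nest f (S i) rl') (pred M)
  end.

Definition ZqM_word (q : R) (M : nat) (w : word) : R := nest (Fq q) M (rev w).

Definition ZqM (q : R) (M : nat) (s : elt) : R :=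
  fold_right (fun p acc => peval (fst p) (1 - q) * ZqM_word q M (snd p) + acc) 0 s.

Definition Zq (q : R) (s : elt) : R := real (Lim_seq (fun M => ZqM q M s)).

Definition gk (ks : list nat) : elt := [(cone, map G ks)].

Definition zetaM (M : nat) (ks : list nat) : R :=
  nest (fun (m k : nat) => Rinv (INR m ^ k)) M (rev ks).
Definition zeta (ks : list nat) : R := real (Lim_seq (fun M => zetaM M ks)).

Definition admissible (ks : list nat) : Prop :=
  List.Forall (fun k => (1 <= k)%nat) ks /\ (ks = [] \/ (2 <= last ks 0)%nat).

(** Generators of n_0:
    (hbar b)^a1 g_{b1+1} ... (hbar b)^ar g_{br+1}, r >= 1,
    with a_s >= 1 and b_t >= 1 for some 1 <= s <= t <= r. *)
Definition block (p : nat * nat) : word := repeat Hb (fst p) ++ [G (S (snd p))].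

Definition n0word (w : word) : Prop :=
  exists blocks : list (nat * nat),
    blocks <> [] /\ w = flat_map block blocks /\
    exists s t, (s <= t)%nat /\ (t < length blocks)%nat /\
      (1 <= fst (nth s blocks (0%nat, 0%nat)))%nat /\
      (1 <= snd (nth t blocks (0%nat, 0%nat)))%nat.

(** Words spanning \hat{H^0} = C + sum_{k>=1} C<A> g_k. *)
Definition H0word (w : word) : Prop :=
  List.Forall valid_letter w /\
  (w = [] \/ exists w' k, (1 <= k)%nat /\ w = w' ++ [G k]).

(** The element  s0 + hbar * s1  of n = n_0 + hbar \hat{H^0},
    where s0 is a C-combination of n_0 generators and s1 an element of \hat{H^0}. *)
Definition n_elt (s0 s1 : elt) : elt :=
  s0 ++ map (fun p => (hbar_mul (fst p), snd p)) s1.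

From Stdlib Require Import Reals List.
From Coquelicot Require Import Coquelicot.
From Stdlib Require Import Lra Lia Qreals ZArith.
Import ListNotations.
Open Scope R_scope.

(** Write [x = 1 - q].

   (i) Since [q^m / [m] <= 1/m], the truncated sums [Z_{q,M}(g_k)] increase with
   [M] and are bounded by [zeta_M(k) <= zeta(k)], so [Z_{q,M}(g_k) <= Z_q(g_k) <= zeta(k)].
   Each finite sum [Z_{q,M}(g_k)] tends to [zeta_M(k)] as [q -> 1], and [zeta_M(k)]
   tends to [zeta(k)]; this squeezes [Z_q(g_k)] to [zeta(k)].

   (ii) Let [N ~ 1/x].  The weight [q^n / [n]] is at most [1/n], and at most
   [2 x q^n] for [n >= N]; hence [sum_n (q^n / [n]) (x n)^b = O(log (1/x))] for
   every [b].  Reading a word from its last letter, each [hbar b] contributes a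
   factor [x] per summation index, i.e. a pending factor [x n], and each [g_k]
   costs a factor [O(log (1/x))] while absorbing the pending factors.  A letter
   [g_k] with [k >= 2] that follows some [hbar b] gains a factor [x], because
   [(q^n/[n])^2 (x n) <= x q^n/[n]].  So [Z_{q,M}(w) = O(x log(1/x)^d)]
   uniformly in [M] for [w] in [n_0], and so is [hbar Z_{q,M}(w)] for [w] in
   [\hat{H^0}]; both are [O(sqrt x)]. *)

(** * Finite and nested sums, limits *)

Lemma rsum_ext f g n : (forall i, (i < n)%nat -> f i = g i) -> rsum f n = rsum g n.
Proof.
  induction n as [|n IH]; intros H; simpl; [reflexivity|].
  rewrite IH by (intros; apply H; lia). rewrite H by lia. reflexivity.
Qed.

Lemma rsum_le f g n : (forall i, (i < n)%nat -> f i <= g i) -> rsum f n <= rsum g n.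
Proof.
  induction n as [|n IH]; intros H; simpl; [lra|].
  apply Rplus_le_compat; [apply IH; intros; apply H|apply H]; lia.
Qed.

Lemma rsum_const c n : rsum (fun _ => c) n = INR n * c.
Proof. induction n as [|n IH]; simpl rsum; [simpl; ring|]. rewrite IH, S_INR. ring. Qed.

Lemma rsum_nonneg f n : (forall i, (i < n)%nat -> 0 <= f i) -> 0 <= rsum f n.
Proof.
  intros H. replace 0 with (rsum (fun _ => 0) n).
  - apply rsum_le, H.
  - rewrite rsum_const. ring.
Qed.

Lemma rsum_scal c f n : rsum (fun i => c * f i) n = c * rsum f n.
Proof. induction n as [|n IH]; simpl; [ring|]. rewrite IH. ring. Qed.

Lemma rsum_plus f g n : rsum (fun i => f i + g i) n = rsum f n + rsum g n.
Proof. induction n as [|n IH]; simpl; [ring|]. rewrite IH. ring. Qed.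

Lemma rsum_le_mono f n m : (forall i, 0 <= f i) -> (n <= m)%nat -> rsum f n <= rsum f m.
Proof. intros Hf Hnm. induction Hnm; simpl; [lra|]. specialize (Hf m). lra. Qed.

Lemma rsum_shift f n : rsum f (S n) = f 0%nat + rsum (fun i => f (S i)) n.
Proof. induction n as [|n IH]; [simpl; ring|]. simpl rsum in *. rewrite IH. ring. Qed.

Lemma rsum_telescope_le f g n :
  (forall i, (i < n)%nat -> f i <= g (S i) - g i) -> rsum f n <= g n - g 0%nat.
Proof.
  induction n as [|n IH]; intros H; simpl; [lra|].
  assert (rsum f n <= g n - g 0%nat) by (apply IH; intros; apply H; lia).
  specialize (H n ltac:(lia)). lra.
Qed.

Lemma nest_map {A B} (f : nat -> A -> R) (g : B -> A) M l :
  nest f M (map g l) = nest (fun m b => f m (g b)) M l.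
Proof.
  revert M; induction l as [|u l IH]; intros M; simpl; [reflexivity|].
  apply rsum_ext; intros i _. rewrite IH. reflexivity.
Qed.

Lemma nest_nonneg {A} (f : nat -> A -> R) l :
  (forall n u, 0 <= f (S n) u) -> forall M, 0 <= nest f M l.
Proof.
  intros Hf; induction l as [|u l IH]; intros M; simpl; [lra|].
  apply rsum_nonneg; intros i _. apply Rmult_le_pos; auto.
Qed.

Lemma nest_le_mono {A} (f : nat -> A -> R) l M M' :
  (forall n u, 0 <= f (S n) u) -> (M <= M')%nat -> nest f M l <= nest f M' l.
Proof.
  intros Hf HM; destruct l as [|u l]; simpl; [lra|].
  apply rsum_le_mono; [|lia]. intros i. apply Rmult_le_pos; [|apply nest_nonneg]; auto.
Qed.

Lemma nest_le {A} (f g : nat -> A -> R) l :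
  (forall n u, 0 <= f (S n) u <= g (S n) u) -> forall M, nest f M l <= nest g M l.
Proof.
  intros Hfg; induction l as [|u l IH]; intros M; simpl; [lra|].
  apply rsum_le; intros i _. destruct (Hfg i u).
  apply Rmult_le_compat; auto. apply nest_nonneg. intros; apply Hfg.
Qed.

Section Limits.
Context {T : Type} {F : (T -> Prop) -> Prop} {FF : Filter F}.

Lemma filterlim_Rplus (f g : T -> R) a b :
  filterlim f F (locally a) -> filterlim g F (locally b) ->
  filterlim (fun t => f t + g t) F (locally (a + b)).
Proof.
  intros Hf Hg. apply (filterlim_comp_2 f g Rplus Hf Hg).
  apply (filterlim_plus (V := R_NormedModule)).
Qed.

Lemma filterlim_Rmult (f g : T -> R) a b :
  filterlim f F (locally a) -> filterlim g F (locally b) ->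
  filterlim (fun t => f t * g t) F (locally (a * b)).
Proof.
  intros Hf Hg. apply (filterlim_comp_2 f g Rmult Hf Hg).
  apply (filterlim_mult (K := R_AbsRing)).
Qed.

Lemma filterlim_rsum (h : T -> nat -> R) h0 n :
  (forall i, filterlim (fun t => h t i) F (locally (h0 i))) ->
  filterlim (fun t => rsum (h t) n) F (locally (rsum h0 n)).
Proof.
  intros Hh. induction n as [|n IH]; simpl; [apply filterlim_const|].
  apply filterlim_Rplus; auto.
Qed.

Lemma filterlim_nest {A} (f : T -> nat -> A -> R) (g : nat -> A -> R) l M :
  (forall n u, filterlim (fun t => f t (S n) u) F (locally (g (S n) u))) ->
  filterlim (fun t => nest (f t) M l) F (locally (nest g M l)).
Proof.
  intros Hf. revert M; induction l as [|u l IH]; intros M; simpl; [apply filterlim_const|].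
  apply (filterlim_rsum (fun t i => f t (S i) u * nest (f t) (S i) l)).
  intros i. apply filterlim_Rmult; auto.
Qed.

Lemma filterlim_dominated (f g : T -> R) :
  F (fun t => Rabs (f t) <= g t) -> filterlim g F (locally 0) ->
  filterlim f F (locally 0).
Proof.
  intros Hfg Hg. apply filterlim_locally. intros eps.
  generalize (filter_and _ _ Hfg (proj1 (filterlim_locally g 0) Hg eps)).
  apply filter_imp. intros t [H1 H2].
  change (Rabs (f t - 0) < eps). change (Rabs (g t - 0) < eps) in H2.
  rewrite Rminus_0_r in *. apply Rabs_lt_between in H2. lra.
Qed.

Lemma filterlim_squeeze_seq (f : T -> R) (lo : nat -> T -> R) (l : nat -> R) L :
  (forall M, F (fun t => lo M t <= f t <= L)) ->
  (forall M, filterlim (lo M) F (locally (l M))) ->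
  is_lim_seq l L -> filterlim f F (locally L).
Proof.
  intros Hsq Hlo Hl. apply filterlim_locally. intros eps.
  assert (Heps2 : 0 < eps / 2) by (destruct eps; simpl; lra).
  apply is_lim_seq_spec in Hl. destruct (Hl (mkposreal _ Heps2)) as [M HM].
  specialize (HM M (Nat.le_refl M)). simpl in HM.
  generalize (filter_and _ _ (Hsq M) (proj1 (filterlim_locally _ _) (Hlo M) (mkposreal _ Heps2))).
  apply filter_imp. intros t [Hb Hc]. change (Rabs (lo M t - l M) < eps / 2) in Hc.
  change (Rabs (f t - L) < eps).
  apply Rabs_lt_between in Hc. apply Rabs_lt_between in HM. apply Rabs_lt_between. lra.
Qed.

End Limits.

Lemma at_left_1_unit : at_left 1 (fun q => 0 < q < 1).
Proof.
  exists (mkposreal 1 Rlt_0_1). intros y Hy Hy1.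
  change (Rabs (y - 1) < 1) in Hy. apply Rabs_lt_between in Hy. lra.
Qed.

Lemma incr_bounded_lim (u : nat -> R) B :
  (forall n, u n <= u (S n)) -> (forall n, u n <= B) ->
  is_lim_seq u (real (Lim_seq u)) /\ (forall n, u n <= real (Lim_seq u)) /\ real (Lim_seq u) <= B.
Proof.
  intros Hinc HB.
  assert (Hl := Lim_seq_correct' u (ex_finite_lim_seq_incr u B Hinc HB)).
  split; [exact Hl|]. split; [apply is_lim_seq_incr_compare; auto|].
  apply (is_lim_seq_le u (fun _ => B) _ B HB Hl (is_lim_seq_const B)).
Qed.

Lemma Lim_seq_abs_le (u : nat -> R) B :
  (forall n, Rabs (u n) <= B) -> Rabs (real (Lim_seq u)) <= B.
Proof.
  intros H.
  assert (Hup : Rbar_le (Lim_seq u) (Lim_seq (fun _ => B))).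
  { apply Lim_seq_le_loc. exists 0%nat. intros n _.
    specialize (H n). apply Rabs_le_between in H. lra. }
  assert (Hlow : Rbar_le (Lim_seq (fun _ => - B)) (Lim_seq u)).
  { apply Lim_seq_le_loc. exists 0%nat. intros n _.
    specialize (H n). apply Rabs_le_between in H. lra. }
  rewrite Lim_seq_const in Hup, Hlow.
  destruct (Lim_seq u) as [r| |]; simpl in *; try tauto. apply Rabs_le. lra.
Qed.

(** * Elementary inequalities *)

Lemma pow_le_pow_decr y i n : 0 <= y <= 1 -> (i <= n)%nat -> y ^ n <= y ^ i.
Proof.
  intros Hy H; induction H as [|n H IH]; [lra|]. simpl.
  assert (0 <= y ^ n) by (apply pow_le; lra). nra.
Qed.

Lemma pow_sub_le y z b : 0 <= z <= y -> y ^ S b - z ^ S b <= INR (S b) * y ^ b * (y - z).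
Proof.
  intros Hz. induction b as [|b IH]; [simpl; lra|].
  assert (z ^ S b <= y ^ S b) by (apply pow_incr; lra).
  assert (y * (y ^ S b - z ^ S b) <= y * (INR (S b) * y ^ b * (y - z)))
    by (apply Rmult_le_compat_l; lra).
  assert (z ^ S b * (y - z) <= y ^ S b * (y - z)) by (apply Rmult_le_compat_r; lra).
  rewrite (S_INR (S b)). simpl pow in *. nra.
Qed.

Lemma inv_pow_le y j k : 1 <= y -> (j <= k)%nat -> / y ^ k <= / y ^ j.
Proof.
  intros Hy Hjk. apply Rinv_le_contravar; [apply pow_lt; lra|]. apply Rle_pow; auto.
Qed.

Lemma sqrt_gap s t : 0 <= s <= t -> t * t = s * s + 1 -> / t <= 2 * (t - s).
Proof.
  intros Hst Ht. assert (0 < t) by nra.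
  apply Rmult_le_reg_r with t; [lra|]. rewrite Rinv_l by lra. nra.
Qed.

Lemma inv_sqrt_succ_le n : / sqrt (INR (S n)) <= 2 * (sqrt (INR (S n)) - sqrt (INR n)).
Proof.
  apply sqrt_gap.
  - split; [apply sqrt_pos|]. apply sqrt_le_1_alt, le_INR. lia.
  - rewrite !sqrt_sqrt, S_INR by (apply pos_INR). ring.
Qed.

Lemma inv_pow_3_2_succ_le n :
  / (INR (S (S n)) * sqrt (INR (S (S n)))) <= 2 / sqrt (INR (S n)) - 2 / sqrt (INR (S (S n))).
Proof.
  set (s := sqrt (INR (S n))). set (t := sqrt (INR (S (S n)))).
  assert (Hs : 0 < s) by (apply sqrt_lt_R0, lt_0_INR; lia).
  assert (Hst : s <= t) by (apply sqrt_le_1_alt, le_INR; lia).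
  assert (Htt : t * t = INR (S (S n))) by (apply sqrt_sqrt, pos_INR).
  assert (Hgap : / t <= 2 * (t - s)).
  { apply sqrt_gap; [lra|]. rewrite Htt. unfold s. rewrite sqrt_sqrt, S_INR by apply pos_INR. ring. }
  assert (Ht : 0 < t) by lra.
  rewrite <- Htt.
  replace (2 / s - 2 / t) with (2 * (t - s) * / (s * t)) by (field; lra).
  apply Rle_trans with (/ t * / (s * t)).
  - rewrite <- Rinv_mult. apply Rinv_le_contravar.
    + apply Rmult_lt_0_compat; [|apply Rmult_lt_0_compat]; lra.
    + assert (0 <= t * t) by nra. nra.
  - apply Rmult_le_compat_r; [|exact Hgap]. left; apply Rinv_0_lt_compat; nra.
Qed.

Lemma sum_inv_sqrt_le K : rsum (fun i => / sqrt (INR (S i))) K <= 2 * sqrt (INR K).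
Proof.
  eapply Rle_trans; [apply (rsum_telescope_le _ (fun i => 2 * sqrt (INR i)))|].
  - intros i _. generalize (inv_sqrt_succ_le i). lra.
  - simpl. rewrite sqrt_0. lra.
Qed.

Lemma sum_inv_pow_3_2_le K : rsum (fun i => / (INR (S i) * sqrt (INR (S i)))) K <= 3.
Proof.
  destruct K as [|K]; [simpl; lra|]. rewrite rsum_shift.
  replace (/ (INR 1 * sqrt (INR 1))) with 1 by (simpl; rewrite sqrt_1; field).
  assert (Htail : rsum (fun i => / (INR (S (S i)) * sqrt (INR (S (S i))))) K <=
                  (- 2 / sqrt (INR (S K))) - (- 2 / sqrt (INR 1))).
  { apply (rsum_telescope_le _ (fun i => - 2 / sqrt (INR (S i)))). intros i _.
    generalize (inv_pow_3_2_succ_le i). unfold Rdiv. lra. }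
  assert (0 < 2 / sqrt (INR (S K))) by (apply Rdiv_lt_0_compat; [lra|apply sqrt_lt_R0, lt_0_INR; lia]).
  change (INR 1) with 1 in Htail. rewrite sqrt_1 in Htail. unfold Rdiv in *. lra.
Qed.

Lemma ln_le_sub1 z : 0 < z -> ln z <= z - 1.
Proof. intros Hz. generalize (exp_ineq1_le (ln z)). rewrite exp_ln by exact Hz. lra. Qed.

Lemma exp_le_compat a b : a <= b -> exp a <= exp b.
Proof. intros [H|H]; [left; apply exp_increasing, H|subst; lra]. Qed.

(** Apply [1 + t <= exp t] to [t = y / (2 d + 2)]. *)
Lemma pow_le_exp_half y d : 0 <= y -> y ^ d <= (2 * INR d + 2) ^ d * exp (y / 2).
Proof.
  intros Hy. set (c := 2 * INR d + 2).
  assert (Hd : 0 <= INR d) by apply pos_INR.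
  assert (Hc : 0 < c) by (unfold c; lra).
  set (t := y / c).
  assert (Ht : 0 <= t) by (unfold t; apply Rdiv_le_0_compat; lra).
  replace y with (c * t) at 1 by (unfold t; field; lra).
  rewrite Rpow_mult_distr. apply Rmult_le_compat_l; [apply pow_le; lra|].
  apply Rle_trans with (exp t ^ d).
  { apply pow_incr. generalize (exp_ineq1_le t). lra. }
  rewrite <- Rpower_pow by apply exp_pos. unfold Rpower. rewrite ln_exp.
  apply exp_le_compat. unfold t, c.
  apply Rmult_le_reg_r with (2 * INR d + 2); [lra|].
  replace (INR d * (y / (2 * INR d + 2)) * (2 * INR d + 2)) with (INR d * y) by (field; lra).
  nra.
Qed.

(** * Estimates at fixed [q] *)

Definition Fq1 (q : R) (n : nat) : R := q ^ n / qnum q n.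

Lemma Fq_G q n k : Fq q n (G k) = Fq1 q n ^ k.
Proof.
  unfold Fq, Fq1, Rdiv. rewrite Nat.mul_comm, pow_mult, Rpow_mult_distr, pow_inv. reflexivity.
Qed.

Lemma rsum_geom q n : (1 - q) * rsum (pow q) n = 1 - q ^ n.
Proof. induction n as [|n IH]; simpl; [ring|]. rewrite Rmult_plus_distr_l, IH. ring. Qed.

Lemma qnum_rsum q n : q <> 1 -> qnum q n = rsum (pow q) n.
Proof. intros H. unfold qnum. rewrite <- rsum_geom. field. lra. Qed.

Definition harmonic (n : nat) : R := rsum (fun i => / INR (S i)) n.

Lemma harmonic_nonneg n : 0 <= harmonic n.
Proof. apply rsum_nonneg. intros; left; apply Rinv_0_lt_compat, lt_0_INR; lia. Qed.

Lemma harmonic_le_ln n : harmonic (S n) <= 1 + ln (INR (S n)).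
Proof.
  induction n as [|n IH]; unfold harmonic in *.
  - simpl. rewrite ln_1. lra.
  - change (rsum (fun i => / INR (S i)) (S (S n)))
      with (rsum (fun i => / INR (S i)) (S n) + / INR (S (S n))).
    assert (Hn : 0 < INR (S n)) by (apply lt_0_INR; lia).
    assert (ESS : INR (S (S n)) = INR (S n) + 1) by apply S_INR.
    assert (Hl := ln_le_sub1 (INR (S n) / INR (S (S n))) ltac:(apply Rdiv_lt_0_compat; lra)).
    rewrite ln_div in Hl by lra.
    replace (INR (S n) / INR (S (S n)) - 1) with (- / INR (S (S n))) in Hl
      by (rewrite ESS; field; lra).
    lra.
Qed.

Lemma harmonic_trunc_le N K :
  rsum (fun i => if (S i <=? N)%nat then / INR (S i) else 0) K <= harmonic N.
Proof.
  assert (E : rsum (fun i => if (S i <=? N)%nat then / INR (S i) else 0) K = harmonic (min K N)).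
  { induction K as [|K IH]; [reflexivity|].
    change (rsum ?f (S K)) with (rsum f K + f K). rewrite IH. unfold harmonic.
    destruct (Nat.leb_spec (S K) N).
    - rewrite !Nat.min_l by lia. reflexivity.
    - rewrite !Nat.min_r by lia. ring. }
  rewrite E. apply rsum_le_mono; [|lia]. intros; left; apply Rinv_0_lt_compat, lt_0_INR; lia.
Qed.

Definition Nq (q : R) : nat := Z.to_nat (up (/ (1 - q))).

Definition Lamq (q : R) : R := harmonic (Nq q) + 1.

Lemma Nq_spec q : 0 < q < 1 -> 1 <= (1 - q) * INR (Nq q) <= 2.
Proof.
  intros hq. unfold Nq. destruct (archimed (/ (1 - q))) as [A1 A2].
  assert (0 < / (1 - q)) by (apply Rinv_0_lt_compat; lra).
  rewrite INR_IZR_INZ, Z2Nat.id by (apply le_IZR; lra).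
  assert ((1 - q) * / (1 - q) = 1) by (field; lra).
  split; nra.
Qed.

Lemma Lamq_ge_1 q : 1 <= Lamq q.
Proof. unfold Lamq. generalize (harmonic_nonneg (Nq q)). lra. Qed.

Section FixedQ.

Variable q : R.
Hypothesis hq : 0 < q < 1.
Let x := 1 - q.

Lemma Fq1_nonneg n : 0 <= Fq1 q n.
Proof.
  unfold Fq1, qnum. apply Rmult_le_pos; [apply pow_le; lra|].
  destruct n as [|n]; [simpl; rewrite Rminus_diag, Rdiv_0_l, Rinv_0; lra|].
  assert (q ^ S n < 1) by (apply pow_lt_1_compat; lra || lia).
  left. apply Rinv_0_lt_compat, Rdiv_lt_0_compat; lra.
Qed.

Lemma Fq1_le_inv n : (1 <= n)%nat -> Fq1 q n <= / INR n.
Proof.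
  intros Hn. unfold Fq1. rewrite qnum_rsum by lra.
  assert (Hs : INR n * q ^ n <= rsum (pow q) n).
  { rewrite <- rsum_const. apply rsum_le. intros i Hi. apply pow_le_pow_decr; lra || lia. }
  assert (0 < q ^ n) by (apply pow_lt; lra).
  assert (1 <= INR n) by (apply (le_INR 1); auto).
  apply Rle_trans with (q ^ n / (INR n * q ^ n)).
  - unfold Rdiv. apply Rmult_le_compat_l; [lra|]. apply Rinv_le_contravar; nra.
  - right. field. lra.
Qed.

Lemma Fq1_le_1 n : (1 <= n)%nat -> Fq1 q n <= 1.
Proof.
  intros Hn. eapply Rle_trans; [apply Fq1_le_inv, Hn|].
  rewrite <- Rinv_1. apply Rinv_le_contravar; [lra|]. apply (le_INR 1), Hn.
Qed.

Lemma Fq_nonneg n u : 0 <= Fq q (S n) u.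
Proof. destruct u; [simpl; lra|]. rewrite Fq_G. apply pow_le, Fq1_nonneg. Qed.

(** Bernoulli: [q^N (1 + x)^N = (1 - x^2)^N <= 1] and [(1 + x)^N >= 1 + N x >= 2]. *)
Lemma pow_Nq_le_half : q ^ Nq q <= / 2.
Proof.
  assert (HN := Nq_spec q hq). fold x in HN.
  assert (Hb := Rle_pow_lin x (Nq q) ltac:(unfold x; lra)).
  assert (Hsq : (q * (1 + x)) ^ Nq q <= 1).
  { rewrite <- (pow_O (q * (1 + x))). apply pow_le_pow_decr; [unfold x; nra|lia]. }
  rewrite Rpow_mult_distr in Hsq.
  assert (0 <= q ^ Nq q) by (apply pow_le; lra).
  apply Rmult_le_reg_r with 2; [lra|]. rewrite Rinv_l by lra. nra.
Qed.

Lemma Fq1_tail n : (Nq q <= n)%nat -> Fq1 q n <= 2 * x * q ^ n.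
Proof.
  intros Hn.
  assert (q ^ n <= / 2)
    by (eapply Rle_trans; [apply pow_le_pow_decr; [lra|exact Hn]|apply pow_Nq_le_half]).
  assert (0 <= q ^ n) by (apply pow_le; lra).
  unfold Fq1, qnum. fold x.
  replace (q ^ n / ((1 - q ^ n) / x)) with (x * q ^ n / (1 - q ^ n)) by (field; unfold x; split; lra).
  apply Rmult_le_reg_r with (1 - q ^ n); [lra|]. unfold Rdiv. rewrite Rmult_assoc, Rinv_l by lra.
  assert (0 <= x * q ^ n) by (apply Rmult_le_pos; unfold x; lra). nra.
Qed.

Definition moment (b K : nat) : R := rsum (fun n => INR n ^ b * q ^ n) K.

Lemma moment_identity b K :
  x * moment (S b) K + q ^ K * INR (pred K) ^ S b =
  rsum (fun n => (INR n ^ S b - INR (pred n) ^ S b) * q ^ n) K.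
Proof.
  unfold moment. induction K as [|K IH]; [simpl; ring|].
  change (rsum ?f (S K)) with (rsum f K + f K). rewrite <- IH.
  destruct K; unfold x; simpl; ring.
Qed.

Lemma moment_step b K : x * moment (S b) K <= INR (S b) * moment b K.
Proof.
  assert (H := moment_identity b K).
  assert (0 <= q ^ K * INR (pred K) ^ S b) by (apply Rmult_le_pos; apply pow_le; [lra|apply pos_INR]).
  unfold moment in *. rewrite <- (rsum_scal (INR (S b))).
  apply Rle_trans with (rsum (fun n => (INR n ^ S b - INR (pred n) ^ S b) * q ^ n) K); [lra|].
  apply rsum_le. intros n _.
  assert (Hp : 0 <= INR (pred n) <= INR n) by (split; [apply pos_INR|apply le_INR; lia]).
  assert (Hd : INR n - INR (pred n) <= 1) by (destruct n; simpl pred; [lra|rewrite S_INR; lra]).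
  assert (Hs := pow_sub_le (INR n) (INR (pred n)) b Hp).
  assert (0 <= q ^ n) by (apply pow_le; lra).
  assert (0 <= INR (S b) * INR n ^ b) by (apply Rmult_le_pos; [apply pos_INR|apply pow_le, pos_INR]).
  assert (INR (S b) * INR n ^ b * (INR n - INR (pred n)) <= INR (S b) * INR n ^ b) by nra.
  apply Rmult_le_compat_r with (r := q ^ n) in Hs; [|lra].
  assert (INR (S b) * INR n ^ b * (INR n - INR (pred n)) * q ^ n <= INR (S b) * INR n ^ b * q ^ n)
    by (apply Rmult_le_compat_r; lra).
  lra.
Qed.

Lemma moment_le_fact b K : x ^ S b * moment b K <= INR (fact b).
Proof.
  induction b as [|b IH].
  - unfold moment. rewrite (rsum_ext _ (pow q)) by (intros; simpl; ring).
    simpl. rewrite Rmult_1_r. unfold x. rewrite rsum_geom.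
    assert (0 <= q ^ K) by (apply pow_le; lra). lra.
  - assert (Hx : 0 < x ^ S b) by (apply pow_lt; unfold x; lra).
    assert (Hs := moment_step b K).
    replace (x ^ S (S b) * moment (S b) K) with (x ^ S b * (x * moment (S b) K)) by (simpl; ring).
    apply Rle_trans with (x ^ S b * (INR (S b) * moment b K)); [apply Rmult_le_compat_l; lra|].
    change (fact (S b)) with (S b * fact b)%nat. rewrite mult_INR.
    replace (x ^ S b * (INR (S b) * moment b K)) with (INR (S b) * (x ^ S b * moment b K)) by ring.
    apply Rmult_le_compat_l; [apply pos_INR|exact IH].
Qed.

(** Below the scale [Nq q] use [Fq1 q n <= 1/n] and [x n <= 2]; above it use the
    geometric decay [Fq1_tail]. *)
Lemma Fq1_weight_le n b : (1 <= n)%nat ->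
  Fq1 q n * (x * INR n) ^ b <=
  2 ^ b * (if (n <=? Nq q)%nat then / INR n else 0) + 2 * (x ^ S b * (INR n ^ b * q ^ n)).
Proof.
  intros Hn. assert (HN := Nq_spec q hq). fold x in HN.
  assert (Hx : 0 < x) by (unfold x; lra).
  assert (0 <= (x * INR n) ^ b) by (apply pow_le, Rmult_le_pos; [lra|apply pos_INR]).
  assert (0 <= x ^ S b * (INR n ^ b * q ^ n)).
  { apply Rmult_le_pos; [apply pow_le; lra|]. apply Rmult_le_pos; apply pow_le; [apply pos_INR|lra]. }
  assert (0 <= Fq1 q n) by apply Fq1_nonneg.
  destruct (Nat.leb_spec n (Nq q)) as [HnN|HnN].
  - assert (Fq1 q n <= / INR n) by (apply Fq1_le_inv, Hn).
    assert ((x * INR n) ^ b <= 2 ^ b).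
    { apply pow_incr. split; [apply Rmult_le_pos; [lra|apply pos_INR]|].
      apply le_INR in HnN. nra. }
    assert (Fq1 q n * (x * INR n) ^ b <= / INR n * 2 ^ b) by (apply Rmult_le_compat; lra).
    lra.
  - assert (Fq1 q n <= 2 * x * q ^ n) by (apply Fq1_tail; lia).
    apply Rle_trans with (2 * x * q ^ n * (x * INR n) ^ b); [apply Rmult_le_compat_r; lra|].
    right. rewrite Rpow_mult_distr. simpl. ring.
Qed.

Lemma sum_Fq1_weight b K :
  rsum (fun i => Fq1 q (S i) * (x * INR (S i)) ^ b) K <= (2 ^ b + 2 * INR (fact b)) * Lamq q.
Proof.
  eapply Rle_trans; [apply rsum_le; intros i _; apply (Fq1_weight_le (S i) b); lia|].
  rewrite rsum_plus, !rsum_scal.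
  assert (Hh := harmonic_trunc_le (Nq q) K).
  assert (Hm : x ^ S b * rsum (fun i => INR (S i) ^ b * q ^ S i) K <= INR (fact b)).
  { eapply Rle_trans; [|apply (moment_le_fact b (S K))].
    apply Rmult_le_compat_l; [apply pow_le; unfold x; lra|].
    unfold moment. rewrite rsum_shift.
    assert (0 <= INR 0 ^ b * q ^ 0) by (apply Rmult_le_pos; apply pow_le; [apply pos_INR|lra]).
    lra. }
  assert (0 < 2 ^ b) by (apply pow_lt; lra).
  assert (0 < INR (fact b)) by apply INR_fact_lt_0.
  assert (0 <= harmonic (Nq q)) by apply harmonic_nonneg.
  unfold Lamq. nra.
Qed.

(** Words are stored reversed, as in [nest]; the exponent [a] counts the letters
    [hbar b] whose factors [x] are still pending. *)
Definition nest_bound (c : R) (a : nat) (l : list letter) : Prop :=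
  forall m, nest (Fq q) m l <= c * (x * INR m) ^ a.

Lemma scale_pow_nonneg a m : 0 <= (x * INR m) ^ a.
Proof. apply pow_le, Rmult_le_pos; [unfold x; lra|apply pos_INR]. Qed.

Lemma scale_pow_le a n m : (n <= m)%nat -> (x * INR n) ^ a <= (x * INR m) ^ a.
Proof.
  intros Hnm. apply pow_incr. split; [apply Rmult_le_pos; [unfold x; lra|apply pos_INR]|].
  apply Rmult_le_compat_l; [unfold x; lra|apply le_INR, Hnm].
Qed.

Lemma nest_bound_nil : nest_bound 1 0 [].
Proof. intros m. simpl. lra. Qed.

Lemma nest_bound_Hb c a l : 0 <= c -> nest_bound c a l -> nest_bound c (S a) (Hb :: l).
Proof.
  intros Hc HB m. cbn [nest].
  apply Rle_trans with (rsum (fun _ => x * (c * (x * INR m) ^ a)) (pred m)).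
  - apply rsum_le. intros i Hi. apply Rmult_le_compat_l; [unfold x; lra|].
    eapply Rle_trans; [apply HB|]. apply Rmult_le_compat_l; [lra|]. apply scale_pow_le. lia.
  - rewrite rsum_const.
    assert (INR (pred m) <= INR m) by (apply le_INR; lia).
    assert (0 <= x * (c * (x * INR m) ^ a))
      by (apply Rmult_le_pos; [unfold x; lra|apply Rmult_le_pos; [lra|apply scale_pow_nonneg]]).
    replace (c * (x * INR m) ^ S a) with (INR m * (x * (c * (x * INR m) ^ a))) by (simpl; ring).
    apply Rmult_le_compat_r; assumption.
Qed.

Lemma Fq_G_nest_le k c a l i : (1 <= k)%nat -> nest_bound c a l ->
  Fq q (S i) (G k) * nest (Fq q) (S i) l <= Fq1 q (S i) * (c * (x * INR (S i)) ^ a).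
Proof.
  intros Hk HB. rewrite Fq_G.
  assert (H01 : 0 <= Fq1 q (S i) <= 1) by (split; [apply Fq1_nonneg|apply Fq1_le_1; lia]).
  apply Rmult_le_compat.
  - apply pow_le, H01.
  - apply nest_nonneg, Fq_nonneg.
  - rewrite <- (pow_1 (Fq1 q (S i))) at 2. apply pow_le_pow_decr; auto.
  - apply HB.
Qed.

(** For [k >= 2], one factor [Fq1 q n <= 1/n] of [Fq1 q n ^ k] absorbs one
    factor [x n] of the weight, leaving an extra [x]. *)
Lemma Fq_G2_nest_le k c b l i : (2 <= k)%nat -> 0 <= c -> nest_bound c (S b) l ->
  Fq q (S i) (G k) * nest (Fq q) (S i) l <= x * c * (Fq1 q (S i) * (x * INR (S i)) ^ b).
Proof.
  intros Hk Hc HB. rewrite Fq_G. set (f := Fq1 q (S i)). set (n := INR (S i)).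
  assert (H01 : 0 <= f <= 1) by (split; [apply Fq1_nonneg|apply Fq1_le_1; lia]).
  assert (Hn : 0 < n) by (apply lt_0_INR; lia).
  assert (Hfn : f * n <= 1).
  { apply Rmult_le_reg_r with (/ n); [apply Rinv_0_lt_compat, Hn|].
    rewrite Rmult_assoc, Rinv_r, Rmult_1_l, Rmult_1_r by lra. apply Fq1_le_inv. lia. }
  assert (Hw := scale_pow_nonneg b (S i)). fold n in Hw.
  apply Rle_trans with (f ^ 2 * (c * (x * n) ^ S b)).
  - apply Rmult_le_compat; [apply pow_le, H01|apply nest_nonneg, Fq_nonneg| |apply HB].
    apply pow_le_pow_decr; auto.
  - replace (f ^ 2 * (c * (x * n) ^ S b)) with ((f * n) * (x * c * (f * (x * n) ^ b)))
      by (simpl; ring).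
    rewrite <- (Rmult_1_l (x * c * (f * (x * n) ^ b))) at 2.
    apply Rmult_le_compat_r; [|exact Hfn].
    apply Rmult_le_pos; [apply Rmult_le_pos; [unfold x; lra|exact Hc]|apply Rmult_le_pos; lra].
Qed.

Lemma nest_bound_G k c a l : (1 <= k)%nat -> 0 <= c -> nest_bound c a l ->
  nest_bound (3 * Lamq q * c) a (G k :: l).
Proof.
  intros Hk Hc HB m. cbn [nest].
  set (w := c * (x * INR m) ^ a).
  assert (Hw : 0 <= w) by (apply Rmult_le_pos; [lra|apply scale_pow_nonneg]).
  apply Rle_trans with (rsum (fun i => w * (Fq1 q (S i) * (x * INR (S i)) ^ 0)) (pred m)).
  - apply rsum_le. intros i Hi. eapply Rle_trans; [apply Fq_G_nest_le; eauto|].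
    rewrite pow_O, Rmult_1_r, (Rmult_comm w). apply Rmult_le_compat_l; [apply Fq1_nonneg|].
    unfold w. apply Rmult_le_compat_l; [lra|]. apply scale_pow_le. lia.
  - rewrite rsum_scal. assert (Hs := sum_Fq1_weight 0 (pred m)).
    replace (2 ^ 0 + 2 * INR (fact 0)) with 3 in Hs by (simpl; ring).
    replace (3 * Lamq q * c * (x * INR m) ^ a) with (w * (3 * Lamq q)) by (unfold w; ring).
    apply Rmult_le_compat_l; assumption.
Qed.

Lemma nest_bound_G_close k c a l : (1 <= k)%nat -> 0 <= c -> nest_bound c a l ->
  nest_bound ((2 ^ a + 2 * INR (fact a)) * Lamq q * c) 0 (G k :: l).
Proof.
  intros Hk Hc HB m. cbn [nest]. rewrite pow_O, Rmult_1_r.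
  apply Rle_trans with (rsum (fun i => c * (Fq1 q (S i) * (x * INR (S i)) ^ a)) (pred m)).
  - apply rsum_le. intros i Hi. eapply Rle_trans; [apply Fq_G_nest_le; eauto|]. right. ring.
  - rewrite rsum_scal. rewrite (Rmult_comm _ c). apply Rmult_le_compat_l; [lra|].
    apply sum_Fq1_weight.
Qed.

Lemma nest_bound_G2_close k c b l : (2 <= k)%nat -> 0 <= c -> nest_bound c (S b) l ->
  nest_bound (x * (2 ^ b + 2 * INR (fact b)) * Lamq q * c) 0 (G k :: l).
Proof.
  intros Hk Hc HB m. cbn [nest]. rewrite pow_O, Rmult_1_r.
  apply Rle_trans with (rsum (fun i => x * c * (Fq1 q (S i) * (x * INR (S i)) ^ b)) (pred m)).
  - apply rsum_le. intros i Hi. apply Fq_G2_nest_le; auto.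
  - rewrite rsum_scal.
    replace (x * (2 ^ b + 2 * INR (fact b)) * Lamq q * c)
      with (x * c * ((2 ^ b + 2 * INR (fact b)) * Lamq q)) by ring.
    apply Rmult_le_compat_l; [apply Rmult_le_pos; [unfold x; lra|exact Hc]|].
    apply sum_Fq1_weight.
Qed.

End FixedQ.

(** * Words of [n_0] and of [\hat{H^0}] *)

Definition unif_bound (e a : nat) (l : list letter) : Prop :=
  exists K d, 0 <= K /\
    forall q, 0 < q < 1 -> nest_bound q (K * (1 - q) ^ e * Lamq q ^ d) a l.

Lemma unif_bound_const_nonneg K e d q : 0 <= K -> 0 < q < 1 -> 0 <= K * (1 - q) ^ e * Lamq q ^ d.
Proof.
  intros HK hq. generalize (Lamq_ge_1 q); intros.
  apply Rmult_le_pos; [apply Rmult_le_pos; [exact HK|]|]; apply pow_le; lra.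
Qed.

Lemma weight_const_pos b : 0 < 2 ^ b + 2 * INR (fact b).
Proof. generalize (pow_lt 2 b ltac:(lra)) (INR_fact_lt_0 b). lra. Qed.

Lemma unif_bound_nil : unif_bound 0 0 [].
Proof.
  exists 1, 0%nat. split; [lra|]. intros q hq.
  replace (1 * (1 - q) ^ 0 * Lamq q ^ 0) with 1 by (simpl; ring). apply nest_bound_nil.
Qed.

Lemma unif_bound_Hb e a l : unif_bound e a l -> unif_bound e (S a) (Hb :: l).
Proof.
  intros (K & d & HK & HB). exists K, d. split; [exact HK|]. intros q hq.
  apply nest_bound_Hb; auto using unif_bound_const_nonneg.
Qed.

Lemma unif_bound_G e a k l : (1 <= k)%nat -> unif_bound e a l -> unif_bound e a (G k :: l).
Proof.
  intros Hk (K & d & HK & HB). exists (3 * K), (S d). split; [lra|]. intros q hq.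
  replace (3 * K * (1 - q) ^ e * Lamq q ^ S d)
    with (3 * Lamq q * (K * (1 - q) ^ e * Lamq q ^ d)) by (simpl; ring).
  apply nest_bound_G; auto using unif_bound_const_nonneg.
Qed.

Lemma unif_bound_G_close e a k l : (1 <= k)%nat -> unif_bound e a l -> unif_bound e 0 (G k :: l).
Proof.
  intros Hk (K & d & HK & HB). assert (Hc := weight_const_pos a).
  exists ((2 ^ a + 2 * INR (fact a)) * K), (S d). split; [nra|]. intros q hq.
  replace ((2 ^ a + 2 * INR (fact a)) * K * (1 - q) ^ e * Lamq q ^ S d)
    with ((2 ^ a + 2 * INR (fact a)) * Lamq q * (K * (1 - q) ^ e * Lamq q ^ d)) by (simpl; ring).
  apply nest_bound_G_close; auto using unif_bound_const_nonneg.
Qed.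

Lemma unif_bound_G2_close e b k l : (2 <= k)%nat -> unif_bound e (S b) l ->
  unif_bound (S e) 0 (G k :: l).
Proof.
  intros Hk (K & d & HK & HB). assert (Hc := weight_const_pos b).
  exists ((2 ^ b + 2 * INR (fact b)) * K), (S d). split; [nra|]. intros q hq.
  replace ((2 ^ b + 2 * INR (fact b)) * K * (1 - q) ^ S e * Lamq q ^ S d)
    with ((1 - q) * (2 ^ b + 2 * INR (fact b)) * Lamq q * (K * (1 - q) ^ e * Lamq q ^ d))
    by (simpl; ring).
  apply nest_bound_G2_close; auto using unif_bound_const_nonneg.
Qed.

Lemma unif_bound_prefix e a l l0 :
  List.Forall valid_letter l -> unif_bound e a l0 -> exists a', unif_bound e a' (l ++ l0).
Proof.
  intros Hv HB. induction Hv as [|u l Hu Hv IH]; [exists a; exact HB|].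
  destruct IH as [a' Ha']. destruct u; simpl.
  - exists (S a'). apply unif_bound_Hb, Ha'.
  - exists a'. apply unif_bound_G; auto.
Qed.

Lemma unif_bound_prefix_Hb e a l l0 : List.Forall valid_letter l -> In Hb l ->
  unif_bound e a l0 -> exists a', unif_bound e (S a') (l ++ l0).
Proof.
  intros Hv Hin HB. induction Hv as [|u l Hu Hv IH]; [destruct Hin|].
  destruct u; simpl.
  - destruct (unif_bound_prefix e a l l0 Hv HB) as [a' Ha']. exists a'. apply unif_bound_Hb, Ha'.
  - destruct Hin as [Hin|Hin]; [discriminate|].
    destruct (IH Hin) as [a' Ha']. exists a'. apply unif_bound_G; auto.
Qed.

Lemma unif_bound_H0word_app e w l0 : H0word w -> unif_bound e 0 l0 -> unif_bound e 0 (rev w ++ l0).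
Proof.
  intros [Hv [->|(w' & k & Hk & ->)]] HB; [exact HB|].
  apply Forall_app in Hv as [Hv _].
  destruct (unif_bound_prefix e 0 (rev w') l0 (Forall_rev Hv) HB) as [a' Ha'].
  rewrite rev_app_distr. apply (unif_bound_G_close _ _ _ _ Hk Ha').
Qed.

Lemma unif_bound_H0word w : H0word w -> unif_bound 0 0 (rev w).
Proof.
  intros Hw. rewrite <- app_nil_r. apply unif_bound_H0word_app; [exact Hw|apply unif_bound_nil].
Qed.

Lemma Forall_valid_blocks l : List.Forall valid_letter (flat_map block l).
Proof.
  induction l as [|[a b] l IH]; simpl; [constructor|].
  apply Forall_app; split; [|exact IH]. apply Forall_app; split.
  - apply Forall_forall. intros u Hu. apply repeat_spec in Hu. subst. exact I.
  - constructor; [simpl; lia|constructor].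
Qed.

Lemma H0word_blocks l : H0word (flat_map block l).
Proof.
  split; [apply Forall_valid_blocks|].
  destruct l as [|b l] using rev_ind; [left; reflexivity|right].
  rewrite flat_map_app. simpl. rewrite app_nil_r. unfold block.
  exists (flat_map block l ++ repeat Hb (fst b)), (S (snd b)). split; [lia|].
  rewrite app_assoc. reflexivity.
Qed.

(** The block [t] supplies a letter [g_k] with [k >= 2], preceded (in block [s])
    by a letter [hbar b]; what follows block [t] is again a word of [\hat{H^0}]. *)
Lemma n0word_split w : n0word w ->
  exists B k C, w = B ++ G k :: C /\ (2 <= k)%nat /\ In Hb B /\
    List.Forall valid_letter B /\ H0word C.
Proof.
  intros (blocks & _ & -> & s & t & Hst & Ht & Hs & Hbt).
  destruct (nth_split blocks (0%nat, 0%nat) Ht) as (l1 & l2 & Eb & Hl1).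
  remember (nth t blocks (0%nat, 0%nat)) as bt eqn:Ebt.
  exists (flat_map block l1 ++ repeat Hb (fst bt)), (S (snd bt)), (flat_map block l2).
  split; [|split; [lia|split; [|split; [|apply H0word_blocks]]]].
  - rewrite Eb, flat_map_app. simpl. unfold block. rewrite <- !app_assoc. reflexivity.
  - apply in_or_app. destruct (Nat.eq_dec s t) as [Heq|Hne].
    + right. rewrite Heq, <- Ebt in Hs. destruct (fst bt); [lia|]. left; reflexivity.
    + left. rewrite Eb, app_nth1 in Hs by lia.
      apply in_flat_map. exists (nth s l1 (0%nat, 0%nat)). split; [apply nth_In; lia|].
      unfold block. apply in_or_app. left. destruct (fst (nth s l1 (0%nat, 0%nat))); [lia|].
      left; reflexivity.
  - apply Forall_app; split; [apply Forall_valid_blocks|].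
    apply Forall_forall. intros u Hu. apply repeat_spec in Hu. subst. exact I.
Qed.

Lemma unif_bound_n0word w : n0word w -> unif_bound 1 0 (rev w).
Proof.
  intros Hw. destruct (n0word_split w Hw) as (B & k & C & -> & Hk & Hin & HvB & HC).
  rewrite rev_app_distr. simpl. rewrite <- app_assoc. simpl.
  apply unif_bound_H0word_app; [exact HC|].
  destruct (unif_bound_prefix_Hb 0 0 (rev B) [] (Forall_rev HvB) (proj1 (in_rev _ _) Hin)
              unif_bound_nil) as [b Hb'].
  rewrite app_nil_r in Hb'. exact (unif_bound_G2_close _ _ _ _ Hk Hb').
Qed.

(** * The limit on [n] *)

Lemma Lamq_le_ln q : 0 < q < 1 -> Lamq q <= 3 + ln (/ (1 - q)).
Proof.
  intros hq. assert (HN := Nq_spec q hq). unfold Lamq.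
  destruct (Nq q) as [|n]; [simpl in HN; lra|].
  assert (H1 := harmonic_le_ln n).
  assert (HSn : INR (S n) <= 2 * / (1 - q)).
  { apply Rmult_le_reg_l with (1 - q); [lra|]. rewrite <- Rmult_assoc, (Rmult_comm _ 2), Rmult_assoc.
    rewrite Rinv_r by lra. lra. }
  assert (Hln : ln (INR (S n)) <= ln 2 + ln (/ (1 - q))).
  { rewrite <- ln_mult by (try apply Rinv_0_lt_compat; lra).
    apply ln_le; [apply lt_0_INR; lia|exact HSn]. }
  generalize (ln_le_sub1 2 ltac:(lra)). lra.
Qed.

Lemma mul_exp_half_ln_inv y : 0 < y -> y * exp (ln (/ y) / 2) = sqrt y.
Proof.
  intros Hy. set (e := exp (ln (/ y) / 2)).
  assert (He : e * e = / y).
  { unfold e. rewrite <- exp_plus, <- (exp_ln (/ y)) by (apply Rinv_0_lt_compat, Hy).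
    f_equal. rewrite ln_exp. field. }
  assert (0 < e) by apply exp_pos.
  replace y with ((y * e) * (y * e)) at 2
    by (transitivity (y * y * (e * e)); [ring|rewrite He; field; lra]).
  rewrite sqrt_square; [reflexivity|]. apply Rmult_le_pos; lra.
Qed.

Lemma Lamq_pow_rate d : exists C, 0 <= C /\
  forall q, 0 < q < 1 -> (1 - q) * Lamq q ^ d <= C * sqrt (1 - q).
Proof.
  set (C0 := (2 * INR d + 2) ^ d).
  assert (HC0 : 0 <= C0) by (apply pow_le; generalize (pos_INR d); lra).
  exists (C0 * exp (3 / 2)). split; [apply Rmult_le_pos; [exact HC0|left; apply exp_pos]|].
  intros q hq. set (t := ln (/ (1 - q))).
  assert (Ht : 0 <= t).
  { unfold t. rewrite <- ln_1. apply ln_le; [lra|]. rewrite <- Rinv_1. apply Rinv_le_contravar; lra. }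
  assert (HL : Lamq q ^ d <= (3 + t) ^ d).
  { apply pow_incr. generalize (Lamq_ge_1 q) (Lamq_le_ln q hq). fold t. lra. }
  assert (HE := pow_le_exp_half (3 + t) d ltac:(lra)). fold C0 in HE.
  replace ((3 + t) / 2) with (3 / 2 + t / 2) in HE by field. rewrite exp_plus in HE.
  rewrite <- (mul_exp_half_ln_inv (1 - q)) by lra. fold t.
  apply Rle_trans with ((1 - q) * (C0 * (exp (3 / 2) * exp (t / 2)))).
  - apply Rmult_le_compat_l; lra.
  - right. ring.
Qed.

Lemma unif_bound_rate e l : unif_bound e 0 l -> exists K, 0 <= K /\
  forall q, 0 < q < 1 -> forall M,
    (1 - q) * nest (Fq q) M l <= (1 - q) ^ e * (K * sqrt (1 - q)).
Proof.
  intros (K & d & HK & HB). destruct (Lamq_pow_rate d) as (C & HC & Hr).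
  exists (K * C). split; [apply Rmult_le_pos; assumption|]. intros q hq M.
  specialize (HB q hq M). rewrite pow_O, Rmult_1_r in HB.
  assert (0 <= K * (1 - q) ^ e) by (apply Rmult_le_pos; [exact HK|apply pow_le; lra]).
  apply Rle_trans with ((1 - q) * (K * (1 - q) ^ e * Lamq q ^ d)); [apply Rmult_le_compat_l; lra|].
  replace ((1 - q) * (K * (1 - q) ^ e * Lamq q ^ d)) with (K * (1 - q) ^ e * ((1 - q) * Lamq q ^ d))
    by ring.
  apply Rle_trans with (K * (1 - q) ^ e * (C * sqrt (1 - q))); [apply Rmult_le_compat_l; auto|].
  right. ring.
Qed.

Definition cnorm (c : cpoly) : R := fold_right (fun a acc => Rabs (Q2R a) + acc) 0 c.

Lemma peval_abs_le c y : 0 <= y <= 1 -> Rabs (peval c y) <= cnorm c.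
Proof.
  intros Hy. induction c as [|a c IH]; simpl; [rewrite Rabs_R0; lra|].
  eapply Rle_trans; [apply Rabs_triang|]. apply Rplus_le_compat_l.
  rewrite Rabs_mult, Rabs_pos_eq by lra.
  rewrite <- (Rmult_1_l (cnorm c)). apply Rmult_le_compat; [lra|apply Rabs_pos|lra|exact IH].
Qed.

Lemma cnorm_nonneg c : 0 <= cnorm c.
Proof. eapply Rle_trans; [apply Rabs_pos|apply (peval_abs_le c 0); lra]. Qed.

Definition vanishing_term (p : cpoly * word) : Prop :=
  exists K, 0 <= K /\ forall q, 0 < q < 1 -> forall M,
    Rabs (peval (fst p) (1 - q) * ZqM_word q M (snd p)) <= K * sqrt (1 - q).

Lemma vanishing_term_n0word c w : n0word w -> vanishing_term (c, w).
Proof.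
  intros Hw. destruct (unif_bound_rate 1 (rev w) (unif_bound_n0word w Hw)) as (K & HK & Hr).
  exists (cnorm c * K). split; [apply Rmult_le_pos; [apply cnorm_nonneg|exact HK]|].
  intros q hq M. simpl fst; simpl snd. unfold ZqM_word.
  assert (HZ : 0 <= nest (Fq q) M (rev w)) by (apply nest_nonneg, Fq_nonneg, hq).
  assert (HZK : nest (Fq q) M (rev w) <= K * sqrt (1 - q)).
  { apply Rmult_le_reg_l with (1 - q); [lra|]. rewrite <- (pow_1 (1 - q)) at 2. apply Hr, hq. }
  rewrite Rabs_mult, (Rabs_pos_eq _ HZ), Rmult_assoc.
  apply Rmult_le_compat; [apply Rabs_pos|exact HZ|apply peval_abs_le; lra|exact HZK].
Qed.

Lemma vanishing_term_H0word c w : H0word w -> vanishing_term (hbar_mul c, w).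
Proof.
  intros Hw. destruct (unif_bound_rate 0 (rev w) (unif_bound_H0word w Hw)) as (K & HK & Hr).
  exists (cnorm c * K). split; [apply Rmult_le_pos; [apply cnorm_nonneg|exact HK]|].
  intros q hq M. simpl fst; simpl snd. unfold ZqM_word, hbar_mul. simpl peval.
  replace (Q2R 0) with 0 by (unfold Q2R; simpl; ring).
  assert (HZ : 0 <= (1 - q) * nest (Fq q) M (rev w))
    by (apply Rmult_le_pos; [lra|apply nest_nonneg, Fq_nonneg, hq]).
  assert (HZK := Hr q hq M). rewrite pow_O, Rmult_1_l in HZK.
  replace ((0 + (1 - q) * peval c (1 - q)) * nest (Fq q) M (rev w))
    with (peval c (1 - q) * ((1 - q) * nest (Fq q) M (rev w))) by ring.
  rewrite Rabs_mult, (Rabs_pos_eq _ HZ), Rmult_assoc.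
  apply Rmult_le_compat; [apply Rabs_pos|exact HZ|apply peval_abs_le; lra|exact HZK].
Qed.

Lemma ZqM_vanishing s : List.Forall vanishing_term s -> exists K, 0 <= K /\
  forall q, 0 < q < 1 -> forall M, Rabs (ZqM q M s) <= K * sqrt (1 - q).
Proof.
  induction 1 as [|p s (K1 & HK1 & H1) _ (K2 & HK2 & H2)].
  - exists 0. split; [lra|]. intros q hq M. unfold ZqM. simpl. rewrite Rabs_R0. lra.
  - exists (K1 + K2). split; [lra|]. intros q hq M.
    change (ZqM q M (p :: s)) with (peval (fst p) (1 - q) * ZqM_word q M (snd p) + ZqM q M s).
    eapply Rle_trans; [apply Rabs_triang|].
    generalize (H1 q hq M) (H2 q hq M). lra.
Qed.

Lemma sqrt_rate_lim K : filterlim (fun q => K * sqrt (1 - q)) (at_left 1) (locally 0).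
Proof.
  assert (Hc : continuity_pt (fun q => K * sqrt (1 - q)) 1).
  { apply continuity_pt_mult; [apply continuity_pt_const; intros ??; reflexivity|].
    apply (continuity_pt_comp (fun q => 1 - q) sqrt).
    - apply continuity_pt_minus; [|apply continuity_pt_id].
      apply continuity_pt_const. intros ??. reflexivity.
    - apply continuity_pt_sqrt. lra. }
  apply continuity_pt_filterlim in Hc.
  replace 0 with (K * sqrt (1 - 1)) by (rewrite Rminus_diag, sqrt_0; ring).
  exact (filterlim_filter_le_1 _ (filter_le_within _) Hc).
Qed.

Theorem Zq_n_elt_lim s0 s1 :
  List.Forall (fun p => n0word (snd p)) s0 ->
  List.Forall (fun p => H0word (snd p)) s1 ->
  filterlim (fun q => Zq q (n_elt s0 s1)) (at_left 1) (locally 0).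
Proof.
  intros H0 H1.
  assert (Hs : List.Forall vanishing_term (n_elt s0 s1)).
  { apply Forall_app. split.
    - eapply Forall_impl; [|exact H0]. intros [c w]. apply vanishing_term_n0word.
    - apply Forall_map. eapply Forall_impl; [|exact H1]. intros [c w]. apply vanishing_term_H0word. }
  destruct (ZqM_vanishing _ Hs) as (K & HK & HZ).
  apply (filterlim_dominated _ (fun q => K * sqrt (1 - q))); [|apply sqrt_rate_lim].
  generalize at_left_1_unit. apply filter_imp. intros q hq.
  apply Lim_seq_abs_le. intros M. apply HZ, hq.
Qed.

(** * The limit on admissible indices *)

Lemma inv_pow_mul_sqrt_le n k : 1 <= n -> (1 <= k)%nat -> / n ^ k * sqrt n <= / sqrt n.
Proof.
  intros Hn Hk. assert (Hs : 0 < sqrt n) by (apply sqrt_lt_R0; lra).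
  assert (Hss : sqrt n * sqrt n = n) by (apply sqrt_sqrt; lra).
  remember (sqrt n) as s eqn:Es.
  apply Rle_trans with (/ n ^ 1 * s).
  - apply Rmult_le_compat_r; [lra|]. apply inv_pow_le; assumption.
  - right. rewrite <- Hss. field. lra.
Qed.

Lemma inv_pow_mul_sqrt_le_3_2 n k : 1 <= n -> (2 <= k)%nat -> / n ^ k * sqrt n <= / (n * sqrt n).
Proof.
  intros Hn Hk. assert (Hs : 0 < sqrt n) by (apply sqrt_lt_R0; lra).
  assert (Hss : sqrt n * sqrt n = n) by (apply sqrt_sqrt; lra).
  remember (sqrt n) as s eqn:Es.
  apply Rle_trans with (/ n ^ 2 * s).
  - apply Rmult_le_compat_r; [lra|]. apply inv_pow_le; assumption.
  - right. rewrite <- Hss. field. lra.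
Qed.

Lemma nest_inv_pow_le_sqrt l : List.Forall (fun k => (1 <= k)%nat) l ->
  forall m, (1 <= m)%nat -> nest (fun m k => / INR m ^ k) m l <= 2 ^ length l * sqrt (INR m).
Proof.
  induction 1 as [|k l Hk Hl IH]; intros m Hm.
  - simpl. rewrite Rmult_1_l, <- sqrt_1 at 1. apply sqrt_le_1_alt, (le_INR 1), Hm.
  - cbn [nest length].
    apply Rle_trans with (rsum (fun i => 2 ^ length l * / sqrt (INR (S i))) (pred m)).
    + apply rsum_le. intros i _. assert (Hn : 1 <= INR (S i)) by (apply (le_INR 1); lia).
      apply Rle_trans with (/ INR (S i) ^ k * (2 ^ length l * sqrt (INR (S i)))).
      * apply Rmult_le_compat_l; [left; apply Rinv_0_lt_compat, pow_lt; lra|apply IH; lia].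
      * replace (/ INR (S i) ^ k * (2 ^ length l * sqrt (INR (S i))))
          with (2 ^ length l * (/ INR (S i) ^ k * sqrt (INR (S i)))) by ring.
        apply Rmult_le_compat_l; [apply pow_le; lra|apply inv_pow_mul_sqrt_le; assumption].
    + rewrite rsum_scal.
      replace (2 ^ S (length l) * sqrt (INR m)) with (2 ^ length l * (2 * sqrt (INR m)))
        by (simpl; ring).
      apply Rmult_le_compat_l; [apply pow_le; lra|].
      eapply Rle_trans; [apply sum_inv_sqrt_le|].
      apply Rmult_le_compat_l; [lra|]. apply sqrt_le_1_alt, le_INR. lia.
Qed.

(** The innermost sums grow at most like [sqrt m], which the last exponent
    [k_r >= 2] beats. *)
Lemma zetaM_bounded ks : admissible ks -> exists B, forall M, zetaM M ks <= B.
Proof.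
  intros [Hf [->|Hl]]; [exists 1; intros M; unfold zetaM; simpl; lra|].
  assert (Hne : ks <> []) by (intros ->; simpl in Hl; lia).
  destruct (exists_last Hne) as (ks0 & k & ->). rewrite last_last in Hl.
  apply Forall_app in Hf as [Hf _].
  exists (2 ^ length ks0 * 3). intros M. unfold zetaM. rewrite rev_app_distr. cbn [nest rev app].
  apply Rle_trans with (rsum (fun i => 2 ^ length ks0 * / (INR (S i) * sqrt (INR (S i)))) (pred M)).
  - apply rsum_le. intros i _. assert (Hn : 1 <= INR (S i)) by (apply (le_INR 1); lia).
    assert (HI := nest_inv_pow_le_sqrt (rev ks0) (Forall_rev Hf) (S i) ltac:(lia)).
    rewrite length_rev in HI.
    apply Rle_trans with (/ INR (S i) ^ k * (2 ^ length ks0 * sqrt (INR (S i)))).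
    + apply Rmult_le_compat_l; [left; apply Rinv_0_lt_compat, pow_lt; lra|exact HI].
    + replace (/ INR (S i) ^ k * (2 ^ length ks0 * sqrt (INR (S i))))
        with (2 ^ length ks0 * (/ INR (S i) ^ k * sqrt (INR (S i)))) by ring.
      apply Rmult_le_compat_l; [apply pow_le; lra|apply inv_pow_mul_sqrt_le_3_2; assumption].
  - rewrite rsum_scal. apply Rmult_le_compat_l; [apply pow_le; lra|apply sum_inv_pow_3_2_le].
Qed.

Lemma ZqM_gk q M ks : ZqM q M (gk ks) = nest (fun m k => Fq q m (G k)) M (rev ks).
Proof.
  unfold ZqM, gk, ZqM_word, cone. simpl fold_right. simpl peval.
  replace (Q2R 1) with 1 by (unfold Q2R; simpl; field).
  rewrite <- map_rev, nest_map. ring.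
Qed.

Lemma ZqM_gk_le_zetaM q M ks : 0 < q < 1 -> ZqM q M (gk ks) <= zetaM M ks.
Proof.
  intros hq. rewrite ZqM_gk. apply nest_le. intros n k. rewrite Fq_G, <- pow_inv.
  assert (0 <= Fq1 q (S n)) by apply Fq1_nonneg, hq.
  split; [apply pow_le; assumption|]. apply pow_incr.
  split; [assumption|]. apply Fq1_le_inv; [exact hq|lia].
Qed.

Lemma continuity_pt_rsum (h : nat -> R -> R) n x :
  (forall i, continuity_pt (h i) x) -> continuity_pt (fun y => rsum (fun i => h i y) n) x.
Proof.
  intros Hh. induction n as [|n IH]; simpl.
  - apply continuity_pt_const. intros ??. reflexivity.
  - apply (continuity_pt_plus (fun y => rsum (fun i => h i y) n) (h n)); auto.
Qed.

Lemma continuity_pt_pow_comp (f : R -> R) x k :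
  continuity_pt f x -> continuity_pt (fun y => f y ^ k) x.
Proof.
  intros Hf. apply (continuity_pt_comp f (fun y => y ^ k)); [exact Hf|].
  apply derivable_continuous_pt, derivable_pt_pow.
Qed.

Lemma Fq_G_lim n k :
  filterlim (fun q => Fq q (S n) (G k)) (at_left 1) (locally (/ INR (S n) ^ k)).
Proof.
  set (g := fun q => (q ^ S n / rsum (fun i => q ^ i) (S n)) ^ k).
  assert (Hsum1 : rsum (fun i => 1 ^ i) (S n) = INR (S n)).
  { rewrite (rsum_ext _ (fun _ => 1)) by (intros; apply pow1). rewrite rsum_const. ring. }
  assert (Hn : 0 < INR (S n)) by (apply lt_0_INR; lia).
  assert (Hc : continuity_pt g 1).
  { apply continuity_pt_pow_comp, continuity_pt_div.
    - apply continuity_pt_pow_comp, continuity_pt_id.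
    - apply continuity_pt_rsum. intros i. apply continuity_pt_pow_comp, continuity_pt_id.
    - rewrite Hsum1. lra. }
  apply continuity_pt_filterlim in Hc.
  replace (g 1) with (/ INR (S n) ^ k) in Hc
    by (unfold g; rewrite pow1, Hsum1, <- pow_inv; f_equal; field; lra).
  apply (filterlim_filter_le_1 _ (filter_le_within (fun q => q < 1))) in Hc.
  eapply filterlim_ext_loc; [|exact Hc].
  exists (mkposreal 1 Rlt_0_1). intros q _ Hq.
  unfold g. rewrite Fq_G. unfold Fq1. rewrite qnum_rsum by lra. reflexivity.
Qed.

Theorem Zq_gk_lim ks : admissible ks ->
  filterlim (fun q => Zq q (gk ks)) (at_left 1) (locally (zeta ks)).
Proof.
  intros Ha. destruct (zetaM_bounded ks Ha) as [B HB].
  assert (Hinc : forall M, zetaM M ks <= zetaM (S M) ks).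
  { intros M. apply nest_le_mono; [|lia].
    intros; left; apply Rinv_0_lt_compat, pow_lt, lt_0_INR; lia. }
  destruct (incr_bounded_lim _ B Hinc HB) as (Hzeta & Hle & _).
  apply (filterlim_squeeze_seq _ (fun M q => ZqM q M (gk ks)) (fun M => zetaM M ks)).
  - intros M. generalize at_left_1_unit. apply filter_imp. intros q hq.
    assert (Hi : forall M, ZqM q M (gk ks) <= ZqM q (S M) (gk ks)).
    { intros M'. rewrite !ZqM_gk. apply nest_le_mono; [|lia]. intros; apply Fq_nonneg, hq. }
    destruct (incr_bounded_lim _ (zeta ks) Hi
                (fun M' => Rle_trans _ _ _ (ZqM_gk_le_zetaM q M' ks hq) (Hle M')))
      as (_ & Hlo & Hup).
    split; [apply Hlo|exact Hup].
  - intros M. apply (filterlim_ext (fun q => nest (fun m k => Fq q m (G k)) M (rev ks))).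
    + intros q. symmetry. apply ZqM_gk.
    + apply filterlim_nest. intros n k. apply Fq_G_lim.
  - exact Hzeta.
Qed.

Theorem proposition3p4 :
  (forall ks : list nat, admissible ks ->
     filterlim (fun q => Zq q (gk ks)) (at_left 1) (locally (zeta ks))) /\
  (forall s0 s1 : elt,
     List.Forall (fun p => n0word (snd p)) s0 ->
     List.Forall (fun p => H0word (snd p)) s1 ->
     filterlim (fun q => Zq q (n_elt s0 s1)) (at_left 1) (locally 0)).
Proof.
  split.
  - exact Zq_gk_lim.
  - exact Zq_n_elt_lim.
Qed.
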